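(* Let $(\mathfrak{g},\langle\cdot,\cdot\rangle)$ be a quadratic Lie algebra and let $(\mathfrak{h},\theta_1,\dots,\theta_k)$ be a $k$-symplectic structure on $\mathfrak{g}$. If $\mathfrak{h}$ is nondegenerate with respect to $\langle\cdot,\cdot\rangle$ (i.e. the restriction of $\langle\cdot,\cdot\rangle$ to $\mathfrak{h}$ is nondegenerate), then the cohomology classes $[\theta_1],\dots,[\theta_k]$ are linearly independent in $H^2(\mathfrak{g})$. In particular, if $k>\dim H^2(\mathfrak{g})$ then $\mathfrak{h}$ is degenerate with respect to $\langle\cdot,\cdot\rangle$.
   Context: A quadratic Lie algebra is a finite-dimensional real Lie algebra $\mathfrak{g}$ endowed with a nondegenerate symmetric bilinear form $\langle\cdot,\cdot\rangle$ which is invariant: $\langle [u,v],w\rangle+\langle [u,w],v\rangle=0$ for all $u,v,w\in\mathfrak{g}$. $H^2(\mathfrak{g})$ denotes the second Chevalley–Eilenberg cohomology group of $\mathfrak{g}$ with trivial real coefficients, and $[\theta]$ the class of a 2-cocycle $\theta$. A $k$-symplectic structure on a real Lie algebra $\mathfrak{g}$ of dimension $n(k+1)$ ($n,k\ge1$) is a pair consisting of a Lie subalgebra $\mathfrak{h}\subset\mathfrak{g}$ of dimension $nk$ and a family $(\theta_1,\dots,\theta_k)$ of skew-symmetric bilinear forms on $\mathfrak{g}$ such that: (i) $\bigcap_{i=1}^k\ker\theta_i=\{0\}$, where $\ker\theta_i=\{u\in\mathfrak{g}:\theta_i(u,v)=0\ \forall v\in\mathfrak{g}\}$; (ii) each $\theta_i$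 is a 2-cocycle: $\theta_i([u,v],w)+\theta_i([v,w],u)+\theta_i([w,u],v)=0$ for all $u,v,w$; (iii) $\theta_i(u,v)=0$ for all $u,v\in\mathfrak{h}$ and all $i$. *)

From HB Require Import structures.
From mathcomp Require Import all_boot all_order all_algebra.
From mathcomp Require Import reals.
Set Implicit Arguments. Unset Strict Implicit. Unset Printing Implicit Defensive.
Import GRing.Theory Num.Theory.
Local Open Scope ring_scope.

(* Real Lie algebras are modelled as a finite-dimensional real vector space
   V : vectType R (R : realType) with a bracket br : V -> V -> V. *)

Section Defs.
Variables (R : realType) (V : vectType R).

Definition bilinear_map (W : lmodType R) (f : V -> V -> W) : Prop :=
  (forall (a : R) (u u' v : V), f (a *: u + u') v = a *: f u v + f u' v) /\
  (forall (a : R) (u v v' : V), f u (a *: v + v') = a *: f u v + f u v').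

Definition bilinear_form (B : V -> V -> R) : Prop :=
  (forall (a : R) (u u' v : V), B (a *: u + u') v = a * B u v + B u' v) /\
  (forall (a : R) (u v v' : V), B u (a *: v + v') = a * B u v + B u v').

Definition linear_form (f : V -> R) : Prop :=
  forall (a : R) (u v : V), f (a *: u + v) = a * f u + f v.

Definition is_lie_bracket (br : V -> V -> V) : Prop :=
  [/\ bilinear_map br,
      (forall u, br u u = 0) &
      (forall u v w, br u (br v w) + br v (br w u) + br w (br u v) = 0)].

Definition is_quadratic_form (br : V -> V -> V) (B : V -> V -> R) : Prop :=
  [/\ bilinear_form B,
      (forall u v, B u v = B v u),
      (forall u, (forall v, B u v = 0) -> u = 0) &
      (forall u v w, B (br u v) w + B (br u w) v = 0)].

Definition is_subalgebra (br : V -> V -> V) (h : {vspace V}) : Prop :=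
  forall u v, u \in h -> v \in h -> br u v \in h.

Definition is_2cocycle (br : V -> V -> V) (th : V -> V -> R) : Prop :=
  [/\ bilinear_form th,
      (forall u v, th u v = - th v u) &
      (forall u v w, th (br u v) w + th (br v w) u + th (br w u) v = 0)].

(* 2-coboundary: th(u,v) = f([u,v]) for some linear form f (the sign
   convention d f (u,v) = - f([u,v]) is immaterial since f is arbitrary) *)
Definition is_2coboundary (br : V -> V -> V) (th : V -> V -> R) : Prop :=
  exists f : V -> R, linear_form f /\ forall u v, th u v = f (br u v).

Definition k_symplectic (br : V -> V -> V) (n k : nat) (h : {vspace V})
  (theta : 'I_k -> V -> V -> R) : Prop :=
  [/\ ((1 <= n)%N /\ (1 <= k)%N),
      (\dim (fullv : {vspace V}) = (n * k.+1)%N /\ \dim h = (n * k)%N),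
      is_subalgebra br h,
      (forall u, (forall i v, theta i u v = 0) -> u = 0) &
      ((forall i, is_2cocycle br (theta i)) /\
       (forall i u v, u \in h -> v \in h -> theta i u v = 0))].

Definition nondegenerate_on (B : V -> V -> R) (h : {vspace V}) : Prop :=
  forall u, u \in h -> (forall v, v \in h -> B u v = 0) -> u = 0.

(* the classes [theta_i] in H^2(g) are linearly independent:
   any linear combination whose class vanishes (i.e. is a coboundary)
   has all coefficients zero *)
Definition classes_lin_indep (br : V -> V -> V) (k : nat)
  (theta : 'I_k -> V -> V -> R) : Prop :=
  forall c : 'I_k -> R,
    is_2coboundary br (fun u v => \sum_(i < k) c i * theta i u v) ->
    forall i, c i = 0.

End Defs.

Arguments k_symplectic {R V} br n k h theta.
Arguments classes_lin_indep {R V} br k theta.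

From HB Require Import structures.
From mathcomp Require Import all_boot all_order all_algebra.
From mathcomp Require Import reals.
Set Implicit Arguments. Unset Strict Implicit. Unset Printing Implicit Defensive.
Import GRing.Theory Num.Theory.
Local Open Scope ring_scope.

(* Let theta_c = sum_i c_i theta_i be a coboundary,
   theta_c(u,v) = f([u,v]), with some c_i0 <> 0.
   - Nondegeneracy of B represents f as B(z,.), and invariance turns this into
     theta_c(u,v) = - B([u,z],v); in particular theta_c(z,.) = 0.
   - Since the theta_i vanish on h and have no common kernel, the pairing
     u |-> (theta_i(u, w_j))_(i,j) (w a basis of a complement of h) is an
     injective linear map from h onto the k x n matrices, the dimensions being
     equal.  Hence theta_c "separates" h from V/h: for every x outside h there
     is u in h with theta_c(u,x) <> 0.
   - Separation and theta_c(.,z) = 0 force z in h; then for u in h the vector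
     [u,z] lies in h and is B-orthogonal to h, so [u,z] = 0 and theta_c(u,.) = 0
     on all of V, contradicting separation once more. *)

Section LinearForm.
Variables (K : fieldType) (V : vectType K) (g : V -> K).
Hypothesis g_lin : forall a u v, g (a *: u + v) = a * g u + g v.

Lemma lf0 : g 0 = 0.
Proof.
have := g_lin 1 0 0; rewrite scale1r addr0 mul1r => /(congr1 (fun x => x - g 0)).
by rewrite addrK subrr.
Qed.

Lemma lfZ a u : g (a *: u) = a * g u.
Proof. by have := g_lin a u 0; rewrite addr0 lf0 addr0. Qed.

Lemma lfD u v : g (u + v) = g u + g v.
Proof. by have := g_lin 1 u v; rewrite scale1r mul1r. Qed.

Lemma lf_sum (I : Type) (r : seq I) (P : pred I) (F : I -> V) :
  g (\sum_(i <- r | P i) F i) = \sum_(i <- r | P i) g (F i).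
Proof.
apply: (big_rec2 (fun x y => g x = y)); first exact: lf0.
by move=> i x y _ <-; rewrite lfD.
Qed.

Lemma lf_basis (U : {vspace V}) v : v \in U ->
  g v = \sum_(j < \dim U) coord (vbasis U) j v * g (vbasis U)`_j.
Proof.
move=> vU; rewrite {1}(coord_vbasis vU) lf_sum.
by apply: eq_bigr => j _; rewrite lfZ.
Qed.

End LinearForm.

Lemma injective_linear_onto (K : fieldType) (V W : vectType K) (g : V -> W)
    (U : {vspace V}) :
  (forall a u v, g (a *: u + v) = a *: g u + g v) ->
  (forall u, u \in U -> g u = 0 -> u = 0) ->
  \dim U = dim W -> forall w, exists2 u, u \in U & g u = w.
Proof.
move=> g_lin g_inj dimU w.
pose gL : {linear V -> W} := HB.pack g (GRing.isLinear.Build _ _ _ _ g g_lin).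
pose f := linfun gL.
have capU_ker : (U :&: lker f)%VS = 0%VS.
  apply/eqP; rewrite -subv0; apply/subvP => x; rewrite memv_cap memv_ker.
  case/andP => xU /eqP fx; rewrite lfunE /= in fx.
  by rewrite memv0; apply/eqP; apply: g_inj.
have := limg_ker_dim f U; rewrite capU_ker dimv0 add0n dimU => dim_img.
have img_full : (f @: U)%VS = fullv.
  by apply/eqP; rewrite eqEdim subvf dimvf dim_img leqnn.
have : w \in (f @: U)%VS by rewrite img_full memvf.
by case/memv_imgP => u uU ->; exists u => //; rewrite lfunE.
Qed.

Lemma nondegenerate_represents (K : fieldType) (V : vectType K) (B : V -> V -> K)
    (f : V -> K) :
  (forall a u u' v, B (a *: u + u') v = a * B u v + B u' v) ->
  (forall a u v v', B u (a *: v + v') = a * B u v + B u v') ->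
  (forall x, (forall v, B x v = 0) -> x = 0) ->
  (forall a u v, f (a *: u + v) = a * f u + f v) ->
  exists z, forall v, B z v = f v.
Proof.
move=> B_linl B_linr B_nd f_lin.
pose b := vbasis (fullv : {vspace V}).
pose row_of x : 'rV[K]_(\dim (fullv : {vspace V})) := \row_j B x b`_j.
have [z _ row_z] : exists2 z, z \in (fullv : {vspace V}) & row_of z = \row_j f b`_j.
  apply: injective_linear_onto.
  - by move=> a u v; apply/matrixP => i j; rewrite !mxE B_linl.
  - move=> x _ /matrixP row_x0; apply: B_nd => v.
    rewrite (lf_basis (fun a => B_linr a x) (memvf v)) big1 // => j _.
    by have := row_x0 0 j; rewrite !mxE => ->; rewrite mulr0.
  - by rewrite dim_matrix; exact: (esym (mul1n _)).
exists z => v.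
rewrite (lf_basis (B_linr ^~ z) (memvf v)) (lf_basis f_lin (memvf v)).
apply: eq_bigr => j _; congr (_ * _).
by have := congr1 (fun M : 'rV_(\dim (fullv : {vspace V})) => M ord0 j) row_z; rewrite !mxE.
Qed.

Section KSymplectic.
Variables (R : realType) (V : vectType R) (br : V -> V -> V) (n k : nat).
Variables (h : {vspace V}) (theta : 'I_k -> V -> V -> R).
Hypothesis ksymp : k_symplectic br n k h theta.

Definition theta_comb (c : 'I_k -> R) (u v : V) : R :=
  \sum_(i < k) c i * theta i u v.

Lemma theta_linl i a u u' v :
  theta i (a *: u + u') v = a * theta i u v + theta i u' v.
Proof. by case: ksymp => _ _ _ _ [/(_ i) [[-> _]]]. Qed.

Lemma theta_linr i u a v v' :
  theta i u (a *: v + v') = a * theta i u v + theta i u v'.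
Proof. by case: ksymp => _ _ _ _ [/(_ i) [[_ ->]]]. Qed.

Lemma theta_comb_linr c u a v v' :
  theta_comb c u (a *: v + v') = a * theta_comb c u v + theta_comb c u v'.
Proof.
rewrite /theta_comb mulr_sumr -big_split; apply: eq_bigr => i _ /=.
by rewrite theta_linr mulrDr mulrCA.
Qed.

Lemma theta_comb_anti c u v : theta_comb c u v = - theta_comb c v u.
Proof.
rewrite /theta_comb -sumrN; apply: eq_bigr => i _.
by case: ksymp => _ _ _ _ [/(_ i) [_ -> _] _]; rewrite mulrN.
Qed.

Lemma theta_comb_h c u v : u \in h -> v \in h -> theta_comb c u v = 0.
Proof.
move=> uh vh; rewrite /theta_comb big1 // => i _.
by case: ksymp => _ _ _ _ [_ ->] //; rewrite mulr0.
Qed.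

Lemma dim_compl_h : \dim h^C = n.
Proof. by case: ksymp => _ [dimV dimh] _ _ _; rewrite dimv_compl dimV dimh mulnS addnK. Qed.

Definition pairing (u : V) : 'M[R]_(k, \dim h^C) :=
  \matrix_(i, j) theta i u (vbasis h^C)`_j.

(* The pairing is injective on h (common kernel of the theta_i is trivial and
   they vanish on h), hence onto by dimension count: dim h = n k. *)
Lemma pairing_onto M : exists2 u, u \in h & pairing u = M.
Proof.
case: ksymp => _ [_ dimh] _ ker0 [_ theta_h].
apply: injective_linear_onto.
- by move=> a u v; apply/matrixP => i j; rewrite !mxE theta_linl.
- move=> u uh /matrixP pair0; apply: ker0 => i v.
  have : v \in (h + h^C)%VS by rewrite addv_complf memvf.
  case/memv_addP => v1 v1h [v2 v2C ->].
  rewrite (lfD (theta_linr i u)) theta_h // add0r.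
  rewrite (lf_basis (theta_linr i u) v2C) big1 // => j _.
  by have := pair0 i j; rewrite !mxE => ->; rewrite mulr0.
- by rewrite dim_matrix dimh dim_compl_h mulnC.
Qed.

Lemma theta_comb_delta c u i0 j0 (j : 'I_(\dim h^C)) :
  pairing u = delta_mx i0 j0 ->
  theta_comb c u (vbasis h^C)`_j = c i0 * (j == j0)%:R.
Proof.
move=> pair_u; have entry i := congr1 (fun M : 'M_(k, \dim h^C) => M i j) pair_u.
rewrite /theta_comb (bigD1 i0) //= big1 => [|i ii0].
  by have := entry i0; rewrite !mxE eqxx /= => ->; rewrite addr0.
by have := entry i; rewrite !mxE (negbTE ii0) /= => ->; rewrite mulr0.
Qed.

Lemma theta_comb_separates c i0 x : c i0 != 0 -> x \notin h ->
  exists2 u, u \in h & theta_comb c u x != 0.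
Proof.
move=> ci0 xNh.
have : x \in (h + h^C)%VS by rewrite addv_complf memvf.
case/memv_addP => x1 x1h [x2 x2C x_eq].
have [j0 coord_j0] : exists j0, coord (vbasis h^C) j0 x2 != 0.
  apply/existsP; apply: contraR xNh => /existsPn coord0.
  rewrite x_eq (coord_vbasis x2C) big1 ?addr0 // => j _.
  by rewrite (eqP (negPn (coord0 j))) scale0r.
have [u uh pair_u] := pairing_onto (delta_mx i0 j0).
exists u => //.
rewrite x_eq (lfD (theta_comb_linr c u)) theta_comb_h // add0r.
rewrite (lf_basis (theta_comb_linr c u) x2C) (bigD1 j0) //= big1 => [|j jj0].
  by rewrite (theta_comb_delta _ _ pair_u) eqxx mulr1 addr0 mulf_neq0.
by rewrite (theta_comb_delta _ _ pair_u) (negbTE jj0) !mulr0.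
Qed.

(* h is a proper subspace, since its complement has dimension n >= 1. *)
Lemma exists_outside_h : exists x, x \notin h.
Proof.
have pick_neq0 : vpick h^C != 0.
  case: ksymp => [[n_gt0 _]] _ _ _ _.
  by rewrite vpick0 -dimv_eq0 dim_compl_h -lt0n.
exists (vpick h^C); apply: contraNN pick_neq0 => pick_h.
have : vpick h^C \in (h :&: h^C)%VS by rewrite memv_cap pick_h memv_pick.
by rewrite capv_compl memv0.
Qed.

End KSymplectic.

Lemma quadratic_coboundary (R : realType) (V : vectType R) (br : V -> V -> V)
    (B : V -> V -> R) (f : V -> R) :
  is_lie_bracket br -> is_quadratic_form br B -> linear_form f ->
  exists z, (forall u v, f (br u v) = - B (br u z) v) /\
            (forall v, f (br z v) = 0).
Proof.
move=> [_ br_alt _] [[B_linl B_linr] B_sym B_nd B_inv] f_lin.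
have [z Bz] := nondegenerate_represents B_linl B_linr B_nd f_lin.
have f_br u v : f (br u v) = - B (br u z) v.
  by apply/eqP; rewrite -Bz B_sym -addr_eq0 B_inv.
exists z; split=> // v.
by rewrite f_br br_alt (lf0 (fun a u u' => B_linl a u u' v)) oppr0.
Qed.

Theorem mainTheorem4 (R : realType) (V : vectType R)
  (br : V -> V -> V) (B : V -> V -> R) (n k : nat) (h : {vspace V})
  (theta : 'I_k -> V -> V -> R) :
  is_lie_bracket br ->
  is_quadratic_form br B ->
  k_symplectic br n k h theta ->
  nondegenerate_on B h ->
  classes_lin_indep br k theta.
Proof.
move=> br_lie B_quad ksymp B_nd_h c [f [f_lin f_th]] i0.
apply/eqP; apply: contraT => ci0.
have th_f u v : theta_comb theta c u v = f (br u v) by exact: f_th.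
have [z [f_B f_z]] := quadratic_coboundary br_lie B_quad f_lin.
(* theta_c(., z) = 0, so by separation z lies in h *)
have z_h : z \in h.
  apply: contraT => zNh; have [u _] := theta_comb_separates ksymp ci0 zNh.
  by rewrite (theta_comb_anti ksymp) th_f f_z oppr0 eqxx.
(* for u in h, [u,z] in h is B-orthogonal to h, hence theta_c(u,.) = 0 *)
have th_h u v : u \in h -> theta_comb theta c u v = 0.
  move=> u_h; have [_ _ h_sub _ _] := ksymp; have [[B_linl _] _ _ _] := B_quad.
  rewrite th_f f_B (B_nd_h (br u z)) ?h_sub // => [|w w_h].
    by rewrite (lf0 (fun a x x' => B_linl a x x' v)) oppr0.
  by apply/eqP; rewrite -oppr_eq0 -f_B -th_f (theta_comb_h ksymp).
have [x xNh] := exists_outside_h ksymp.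
have [u u_h] := theta_comb_separates ksymp ci0 xNh.
by rewrite th_h ?eqxx.
Qed.
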